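(* Let $(\mathcal{P},\Sigma)$ be a measurable space, let $\mathbb{P}^+,\mathbb{P}^-$ be mutually singular probability measures on it, let $\beta\in(0,1)$ and $\mathbb{P}_m=\beta\mathbb{P}^++(1-\beta)\mathbb{P}^-$, and fix $a>0$, $\gamma\in(0,1]$. For a measurable $D:\mathcal{P}\to[0,+\infty)$ and a probability measure $\mathbb{Q}$ on $\mathcal{P}$ (the generated patch-feature distribution $\mathbb{P}_g^{(h,w)}$), define $$L_D(D,\mathbb{Q})=\gamma\,\mathbb{E}_{p\sim\mathbb{Q}}\max(0,a-D(p))+(1-\gamma)\,\mathbb{E}_{p\sim\mathbb{P}_m}\max(0,a-D(p))+\mathbb{E}_{p\sim\mathbb{P}^+}D(p),$$ $$L_G(D,\mathbb{Q})=\gamma\,\mathbb{E}_{p\sim\mathbb{Q}}D(p)+(1-\gamma)\,\mathbb{E}_{p\sim\mathbb{P}_m}D(p)-\mathbb{E}_{p\sim\mathbb{P}^+}D(p).$$ Then there is a Nash equilibrium $(D^*,\mathbb{Q}^* )$ with $\mathbb{Q}^*=\mathbb{P}^+$: there exists a measurable $D^*:\mathcal{P}\to[0,a]$ such that (i) $L_D(D^*,\mathbb{P}^+)\le L_D(D,\mathbb{P}^+)$ for every measurable $D:\mathcal{P}\to[0,+\infty)$, and (ii) $L_G(D^*,\mathbb{P}^+)\le L_G(D^*,\mathbb{Q})$ for every probability measure $\mathbb{Q}$ on $\mathcal{P}$.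
   Context: $\mathbb{P}^+$ and $\mathbb{P}^-$ model the distributions of normal and anomalous patch features; $\mathbb{P}_m$ is the (known) distribution of patch features from anomalous images, which mixes normal and anomalous patches with unknown ratio $\beta$. The generator at a fixed patch position is identified with its output distribution $\mathbb{Q}$, which may be any probability measure on $\mathcal{P}$. ''Mutually singular'' means there is a measurable set $S$ with $\mathbb{P}^+(S)=1$ and $\mathbb{P}^-(S)=0$. The discriminator minimizes $L_D$ and the generator minimizes $L_G$. *)

From HB Require Import structures.
From mathcomp Require Import all_boot all_order all_algebra.
From mathcomp Require Import all_classical all_reals all_analysis.
Set Implicit Arguments. Unset Strict Implicit. Unset Printing Implicit Defensive.
Import Order.TTheory GRing.Theory Num.Theory.
Local Open Scope classical_set_scope.
Local Open Scope ring_scope.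
Local Open Scope ereal_scope.

Definition mutually_singular d (T : measurableType d) (R : realType)
  (mu nu : probability T R) : Prop :=
  exists S : set T, [/\ measurable S, mu S = 1 & nu S = 0].

Definition loss_D d (T : measurableType d) (R : realType)
  (gamma a : R) (Pm Pplus : probability T R) (D : T -> R) (Q : probability T R)
  : \bar R :=
  (gamma%:E * \int[Q]_x (Num.max 0 (a - D x))%:E)
  + ((1 - gamma)%:E * \int[Pm]_x (Num.max 0 (a - D x))%:E)
  + \int[Pplus]_x (D x)%:E.

Definition loss_G d (T : measurableType d) (R : realType)
  (gamma : R) (Pm Pplus : probability T R) (D : T -> R) (Q : probability T R)
  : \bar R :=
  (gamma%:E * \int[Q]_x (D x)%:E)
  + ((1 - gamma)%:E * \int[Pm]_x (D x)%:E)
  - \int[Pplus]_x (D x)%:E.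

From HB Require Import structures.
From mathcomp Require Import all_boot all_order all_algebra.
From mathcomp Require Import all_classical all_reals all_analysis.
From mathcomp Require Import measurable_realfun ring lra.
Set Implicit Arguments.
Unset Strict Implicit.
Unset Printing Implicit Defensive.
Import Order.TTheory GRing.Theory Num.Theory.
Local Open Scope classical_set_scope.
Local Open Scope ring_scope.

(* Let S carry P+ and not P-.  The discriminator D* = a 1_{~S} vanishes
   P+-a.e., so L_G(D*, Q) - L_G(D*, P+) = gamma E_Q D* >= 0.  For L_D, the
   pointwise bound max(0, a - t) + t >= a gives E+ h + E+ D >= a for the hinge
   h = max(0, a - D), and the mixture gives E_m h >= beta E+ h; with
   c = gamma + (1 - gamma) beta <= 1 this yields
   L_D(D, P+) >= c E+ h + E+ D >= c a = L_D(D*, P+). *)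

Lemma mixed_loss_lower_bound (R : realDomainType) (gamma beta a h n e : R) :
  0 <= gamma <= 1 -> 0 <= beta <= 1 -> 0 <= e ->
  a <= h + e -> beta * h <= n ->
  (gamma + (1 - gamma) * beta) * a <= gamma * h + (1 - gamma) * n + e.
Proof.
move=> /andP[g0 g1] /andP[b0 b1] e0 hae hn.
have c_le1 : gamma + (1 - gamma) * beta <= 1 by nra.
have c_ge0 : 0 <= gamma + (1 - gamma) * beta by nra.
have : (1 - gamma) * (beta * h) <= (1 - gamma) * n by apply: ler_wpM2l; lra.
have : (gamma + (1 - gamma) * beta) * a <= (gamma + (1 - gamma) * beta) * (h + e).
  exact: ler_wpM2l.
nra.
Qed.

Section integral_facts.
Variables (d : measure_display) (T : measurableType d) (R : realType).

Lemma integral_scaled_indic (mu : {measure set T -> \bar R}) (a : R)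
    (A : set T) : measurable A -> 0 <= a ->
  (\int[mu]_x (a * \1_A x)%:E = a%:E * mu A)%E.
Proof.
move=> mA a0; rewrite (@integralZl_indic _ _ _ _ _ measurableT (fun=> A)) //.
  by rewrite integral_indic // setIT.
by rewrite ltNge a0.
Qed.

Lemma mixture_integral_ge (m m1 m2 : {measure set T -> \bar R}) (b1 b2 : R)
    (f : T -> \bar R) : 0 <= b1 -> 0 <= b2 ->
  (forall A, measurable A -> m A = (b1%:E * m1 A + b2%:E * m2 A)%E) ->
  measurable_fun setT f -> (forall x, 0 <= f x)%E ->
  (b1%:E * \int[m1]_x f x <= \int[m]_x f x)%E.
Proof.
move=> b10 b20 hm mf f0.
pose s1 := mscale (NngNum b10) m1; pose s2 := mscale (NngNum b20) m2.
rewrite (eq_measure_integral (measure_add s1 s2) (m1 := m)); last first.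
  by move=> A mA _; exact: etrans (hm A mA) (esym (measure_addE s1 s2 A)).
rewrite ge0_integral_measure_add // !ge0_integral_mscale //=.
by rewrite leeDl // mule_ge0 ?lee_fin // integral_ge0.
Qed.

Variables (mu : probability T R) (a : R) (D : T -> R).

Lemma integral_cst_probability : (\int[mu]_x (cst a%:E) x = a%:E)%E.
Proof.
rewrite integral_cst // [X in (_ * X)%E](_ : _ = 1%E) ?mule1 //.
exact: probability_setT.
Qed.

Hypotheses (a0 : 0 <= a) (mD : measurable_fun setT D) (D0 : forall x, 0 <= D x).

Lemma measurable_hinge : measurable_fun setT (fun x => Num.max 0 (a - D x)).
Proof. by apply: measurable_maxr => //; exact: measurable_funB. Qed.

Lemma integral_hinge_fin_num :
  (\int[mu]_x (Num.max 0 (a - D x))%:E)%E \is a fin_num.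
Proof.
rewrite ge0_fin_numE; last first.
  by apply: integral_ge0 => x _; rewrite lee_fin le_max lexx.
apply: (@le_lt_trans _ _ (\int[mu]_x (cst a%:E) x)%E); last first.
  by rewrite integral_cst_probability ltry.
apply: ge0_le_integral => //.
- by move=> x _; rewrite lee_fin le_max lexx.
- exact/measurable_EFinP/measurable_hinge.
- by move=> x _; rewrite lee_fin ge_max a0 /= lerBlDr lerDl D0.
Qed.

(* Integrate the pointwise inequality max(0, a - t) + t >= a. *)
Lemma integral_hinge_add_ge :
  (a%:E <= \int[mu]_x (Num.max 0 (a - D x))%:E + \int[mu]_x (D x)%:E)%E.
Proof.
rewrite -ge0_integralD //; last 4 first.
- by move=> x _; rewrite lee_fin le_max lexx.
- exact/measurable_EFinP/measurable_hinge.
- by move=> x _; rewrite lee_fin.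
- exact/measurable_EFinP.
apply: (@le_trans _ _ (\int[mu]_x (cst a%:E) x)%E).
  by rewrite integral_cst_probability.
apply: ge0_le_integral => //.
- by apply: emeasurable_funD; apply/measurable_EFinP => //; exact: measurable_hinge.
- move=> x _; rewrite -EFinD lee_fin.
  have : a - D x <= Num.max 0 (a - D x) by rewrite le_max lexx orbT.
  lra.
Qed.

End integral_facts.

Section nash_equilibrium.
Variables (d : measure_display) (T : measurableType d) (R : realType).

Definition Dstar (a : R) (S : set T) (x : T) : R := a * \1_(~` S) x.

Lemma measurable_Dstar (a : R) (S : set T) :
  measurable S -> measurable_fun setT (Dstar a S).
Proof.
by move=> mS; apply: measurable_funM => //; exact/measurable_indic/measurableC.
Qed.

Lemma Dstar_bounds (a : R) (S : set T) (x : T) :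
  0 <= a -> 0 <= Dstar a S x <= a.
Proof.
by move=> a0; rewrite /Dstar indicE; case: (_ \in _); rewrite ?mulr1 ?mulr0 ?lexx ?a0.
Qed.

Lemma hinge_Dstar (a : R) (S : set T) (x : T) :
  0 <= a -> Num.max 0 (a - Dstar a S x) = a * \1_S x.
Proof.
move=> a0; rewrite /Dstar !indicE in_setC.
by case: (x \in S); rewrite /= ?mulr0 ?mulr1 ?subr0 ?subrr ?maxxx // max_r.
Qed.

Lemma integral_Dstar_null (mu : probability T R) (a : R) (S : set T) :
  0 <= a -> measurable S -> mu S = 1%E -> (\int[mu]_x (Dstar a S x)%:E = 0)%E.
Proof.
move=> a0 mS muS.
rewrite integral_scaled_indic //; last exact: measurableC.
(* [integral_scaled_indic] yields [mu] through the [{measure}] coercion, on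
   which probability lemmas do not rewrite; [change] folds it back. *)
rewrite [X in (_ * X)%E](_ : _ = 0%E) ?mule0 //.
by change (mu (~` S) = 0%E); rewrite probability_setC // muS subee.
Qed.

Lemma loss_G_le_of_null (gamma : R) (Pm Pplus Q : probability T R) (D : T -> R) :
  0 <= gamma -> (forall x, 0 <= D x) -> (\int[Pplus]_x (D x)%:E = 0)%E ->
  (loss_G gamma Pm Pplus D Pplus <= loss_G gamma Pm Pplus D Q)%E.
Proof.
move=> g0 D0 null; rewrite /loss_G null mule0 add0e.
rewrite leeD2r // -[X in (X <= _)%E]add0e leeD2r // mule_ge0 ?lee_fin //.
by apply: integral_ge0 => x _; rewrite lee_fin.
Qed.

Variables (Pplus Pminus Pm : probability T R) (beta a gamma : R).
Hypotheses (beta01 : 0 <= beta <= 1) (a0 : 0 <= a) (gamma01 : 0 <= gamma <= 1).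
Hypothesis Pm_mixture : forall A : set T, measurable A ->
  Pm A = (beta%:E * Pplus A + (1 - beta)%:E * Pminus A)%E.

Lemma loss_D_ge (D : T -> R) : measurable_fun setT D -> (forall x, 0 <= D x) ->
  (((gamma + (1 - gamma) * beta) * a)%:E <= loss_D gamma a Pm Pplus D Pplus)%E.
Proof.
move=> mD D0; case/andP: beta01 => b0 b1; case/andP: gamma01 => g0 g1.
have mh := (measurable_EFinP _ _).2 (measurable_hinge a mD).
have h_ge0 x : (0 <= (Num.max 0 (a - D x))%:E :> \bar R)%E.
  by rewrite lee_fin le_max lexx.
have hP := integral_hinge_add_ge Pplus a0 mD D0.
have hm : (beta%:E * \int[Pplus]_x (Num.max 0 (a - D x))%:E
           <= \int[Pm]_x (Num.max 0 (a - D x))%:E)%E.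
  by apply: (mixture_integral_ge b0 _ Pm_mixture) => //; rewrite subr_ge0.
move: hP hm; rewrite /loss_D -(fineK (integral_hinge_fin_num Pplus a0 mD D0)).
rewrite -(fineK (integral_hinge_fin_num Pm a0 mD D0)).
have : (0 <= \int[Pplus]_x (D x)%:E)%E.
  by apply: integral_ge0 => x _; rewrite lee_fin.
case: (\int[Pplus]_x (D x)%:E)%E => [e| |] //= e0.
- by rewrite -!EFinM -!EFinD !lee_fin; apply: mixed_loss_lower_bound.
- by move=> _ _; rewrite -!EFinM -!EFinD addey // leey.
Qed.

Variable S : set T.
Hypotheses (mS : measurable S) (Pplus_S : Pplus S = 1%E) (Pminus_S : Pminus S = 0%E).

Lemma loss_D_Dstar : loss_D gamma a Pm Pplus (Dstar a S) Pplus
  = ((gamma + (1 - gamma) * beta) * a)%:E.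
Proof.
have Pm_S : Pm S = beta%:E.
  by rewrite Pm_mixture // Pplus_S Pminus_S mule1 mule0 adde0.
rewrite /loss_D integral_Dstar_null // adde0.
under eq_integral do rewrite hinge_Dstar //.
under [X in (_ + _ * X)%E]eq_integral do rewrite hinge_Dstar //.
rewrite !integral_scaled_indic //.
rewrite -[Measure.sort _ S]/(Pplus S) -[Measure.sort _ S]/(Pm S) Pplus_S Pm_S mule1.
by rewrite -!EFinM -EFinD; congr (_%:E); ring.
Qed.

End nash_equilibrium.

Theorem theorem2 (d : measure_display) (T : measurableType d) (R : realType)
  (Pplus Pminus Pm : probability T R) (beta a gamma : R) :
  mutually_singular Pplus Pminus ->
  0 < beta < 1 ->
  (forall A : set T, measurable A ->
     Pm A = (beta%:E * Pplus A + (1 - beta)%:E * Pminus A)%E) ->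
  0 < a -> 0 < gamma <= 1 ->
  exists Dstar : T -> R,
    [/\ measurable_fun setT Dstar,
        (forall x, 0 <= Dstar x <= a),
        (forall D : T -> R, measurable_fun setT D -> (forall x, 0 <= D x) ->
           (loss_D gamma a Pm Pplus Dstar Pplus
              <= loss_D gamma a Pm Pplus D Pplus)%E) &
        (forall Q : probability T R,
           (loss_G gamma Pm Pplus Dstar Pplus
              <= loss_G gamma Pm Pplus Dstar Q)%E)].
Proof.
move=> [S [mS Pplus_S Pminus_S]] /andP[b0 b1] Pm_mixture /ltW a0 /andP[/ltW g0 g1].
have beta01 : 0 <= beta <= 1 by rewrite !ltW.
have gamma01 : 0 <= gamma <= 1 by rewrite g0 g1.
exists (Dstar a S); split.
- exact: measurable_Dstar.
- by move=> x; exact: Dstar_bounds.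
- move=> D mD D0; rewrite (loss_D_Dstar gamma a0 Pm_mixture mS) //.
  exact (loss_D_ge beta01 a0 gamma01 Pm_mixture mD D0).
- move=> Q; apply: loss_G_le_of_null; [exact: g0 | | exact: integral_Dstar_null].
  by move=> x; case/andP: (Dstar_bounds S x a0).
Qed.
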